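(* For every $n\ge1$ and every $\mu$, \[ E_{\mu+n-1}\,E_{\mu+n-2,1}\cdots E_{\mu+1,n-2}\,E_{\mu,n-1}\;\circ\;F_{\mu,n-1}\,F_{\mu+1,n-2}\cdots F_{\mu+n-2,1}\,F_{\mu+n-1} =[\mu+n][\mu+n-1]\cdots[\mu+1]\;\mathrm{Id}_{M(\mu+n)} . \]
   Context: Let $\mathbb{K}=\mathbb{C}(q,q^{\mu})$, where $q$ and $q^{\mu}$ are algebraically independent indeterminates; $[a]=\frac{q^{a}-q^{-a}}{q-q^{-1}}$. $V_1$ is the 2-dimensional $U_q(\mathfrak{sl}_2)$-module with basis $v_0,v_1$. For $\lambda=\mu+k$ ($k\in\mathbb{Z}$), the Verma module $M(\lambda)$ has $\mathbb{K}$-basis $v_0,v_1,\dots$ with $Kv_i=q^{\lambda-2i}v_i$, $Ev_i=[i]v_{i-1}$, $Fv_i=[\lambda-i]v_{i+1}$, $v_{-1}=0$. For each such $\lambda$, the linear maps $E_\lambda: M(\lambda)\otimes V_1\to M(\lambda+1)$ and $F_\lambda: M(\lambda+1)\to M(\lambda)\otimes V_1$ are defined by $E_\lambda(v_i\otimes v_0)=q^iv_i$, $E_\lambda(v_i\otimes v_1)=v_{i+1}$, $F_\lambda(v_i)=[\lambda+1-i]\,v_i\otimes v_0+q^{i-\lambda-1}[i]\,v_{i-1}\otimes v_1$. For $j\ge0$ set $E_{\lambda,j}=E_\lambda\otimes\mathrm{Id}_{V_1}^{\otimes j}: M(\lambda)\otimes V_1^{\otimes (j+1)}\to M(\lambda+1)\otimes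 V_1^{\otimes j}$ and $F_{\lambda,j}=F_\lambda\otimes\mathrm{Id}_{V_1}^{\otimes j}: M(\lambda+1)\otimes V_1^{\otimes j}\to M(\lambda)\otimes V_1^{\otimes(j+1)}$, with $E_{\lambda,0}=E_\lambda$, $F_{\lambda,0}=F_\lambda$. Compositions are read right to left. *)

(* K = C(q, q^mu) is realised as the fraction field of the
   bivariate polynomial ring C[q][Q] over C = R[i] (R = Stdlib reals), with
   q the inner and Q = q^mu the outer polynomial variable. *)
From HB Require Import structures.
From mathcomp Require Import all_boot all_order all_algebra.
From mathcomp Require complex.
Import complex.ComplexField.
From mathcomp Require Import fraction.
From mathcomp Require Import Rstruct.
Set Implicit Arguments. Unset Strict Implicit. Unset Printing Implicit Defensive.
Import Order.TTheory GRing.Theory Num.Theory.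
Local Open Scope ring_scope.

Notation CC := (complex.complex Rdefinitions.R).
Definition K := {fraction {poly {poly CC}}}.

Definition q : K := FracField.tofrac (('X : {poly CC})%:P : {poly {poly CC}}).
Definition qmu : K := FracField.tofrac ('X : {poly {poly CC}}).

Definition qpow (c k : int) : K := qmu ^ c * q ^ k.

(* quantum number [c*mu + k] = (q^a - q^-a)/(q - q^-1) with a = c*mu + k *)
Definition qnum (c k : int) : K :=
  (qpow c k - qpow (- c) (- k)) / (q - q^-1).

(* A basis vector of M(lambda) (x) V_1^{(x) j}: v_i (x) v_{b_1} (x) ... (x) v_{b_j},
   encoded as (i, [:: b_1; ...; b_j]) with false = v_0, true = v_1.
   A vector is a finite formal linear combination: a list of (coefficient, basis vector). *)
Definition term := (K * (nat * seq bool))%type.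
Definition vec := seq term.

Definition basis (i : nat) (w : seq bool) : vec := [:: (1, (i, w))].

Definition coef (v : vec) (i : nat) (w : seq bool) : K :=
  \sum_(t <- v | t.2 == (i, w)) t.1.

Definition linext (f : nat -> seq bool -> vec) (v : vec) : vec :=
  flatten [seq [seq (t.1 * s.1, s.2) | s <- f t.2.1 t.2.2] | t <- v].

(* E_{lambda,j} = E_lambda (x) Id^{(x) j}, on basis vectors
   v_i (x) v_b (x) rest  (lambda = mu + k; E_lambda does not depend on k). *)
Definition E_basis (k : int) (i : nat) (w : seq bool) : vec :=
  match w with
  | false :: rest => [:: (q ^ (i%:Z), (i, rest))]
  | true :: rest => [:: (1, (i.+1, rest))]
  | [::] => [::]  (* not in the domain; never used *)
  end.

(* F_{lambda,j} = F_lambda (x) Id^{(x) j}, lambda = mu + k: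
   v_i (x) rest |-> [lambda+1-i] v_i (x) v_0 (x) rest
                    + q^(i-lambda-1) [i] v_{i-1} (x) v_1 (x) rest   (v_{-1} = 0) *)
Definition F_basis (k : int) (i : nat) (rest : seq bool) : vec :=
  (qnum 1 (k + 1 - i%:Z), (i, false :: rest)) ::
  (if i is i'.+1 then [:: (qpow (-1) (i%:Z - k - 1) * qnum 0 i%:Z, (i', true :: rest))]
   else [::]).

Definition Emap (k : int) : vec -> vec := linext (E_basis k).
Definition Fmap (k : int) : vec -> vec := linext (F_basis k).

(* F_{mu,n-1} ... F_{mu+n-2,1} F_{mu+n-1} : apply F with k = n-1, n-2, ..., 0 *)
Definition Fchain (n : nat) (v : vec) : vec :=
  foldl (fun v k => Fmap k%:Z v) v (rev (iota 0 n)).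
(* E_{mu+n-1} ... E_{mu+1,n-2} E_{mu,n-1} : apply E with k = 0, 1, ..., n-1 *)
Definition Echain (n : nat) (v : vec) : vec :=
  foldl (fun v k => Emap k%:Z v) v (iota 0 n).

From mathcomp Require Import all_boot all_order all_algebra.
From mathcomp Require Import fraction ring.
Import GRing.Theory.
Local Open Scope ring_scope.

(* The heart of the argument is that E_lambda F_lambda = [lambda + 1] Id on
   M(lambda + 1): on v_i the two summands of F_lambda v_i come back under
   E_lambda as q^i [lambda+1-i] v_i and q^(i-lambda-1) [i] v_i, and these add
   up to [lambda+1] v_i.  Since E_{lambda,j} and F_{lambda,j} only act on the
   first two tensor factors, E_{lambda,j} F_{lambda,j} is the same scalar on
   every M(lambda+1) (x) V_1^(x)j, and the composite collapses from the inside
   out, producing one factor [mu+k+1] for each k < n.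
   Formal vectors are lists with repetitions, so they are compared through
   the coordinate functionals, against which linear extension is adjoint. *)

Lemma q_neq0 : q != 0.
Proof. by rewrite /q tofrac_eq0 polyC_eq0 polyX_eq0. Qed.

Lemma qmu_neq0 : qmu != 0.
Proof. by rewrite /qmu tofrac_eq0 polyX_eq0. Qed.

(* [qnum_shift] below with [x = q^a], [y = q^i], [Q = q^mu], [d = 1/(q - q^-1)]. *)
Lemma qshift_identity (F : fieldType) (Q x y d : F) :
  Q != 0 -> x != 0 -> y != 0 ->
  (Q * (x / y) - Q^-1 * (y / x)) * d * y + Q^-1 * (y / x) * ((y - y^-1) * d) =
  (Q * x - Q^-1 / x) * d.
Proof. by move=> Q0 x0 y0; field; rewrite Q0 x0 y0. Qed.

Lemma qnum_shift (a i : int) :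
  qnum 1 (a - i) * q ^ i + qpow (-1) (i - a) * qnum 0 i = qnum 1 a.
Proof.
rewrite /qnum /qpow opprB !expfzDr ?q_neq0 // -!invr_expz.
rewrite expr1z expr0z invr1 !mul1r.
have qa0 : q ^ a != 0 by rewrite expfz_neq0 ?q_neq0.
have qi0 : q ^ i != 0 by rewrite expfz_neq0 ?q_neq0.
exact: (@qshift_identity _ qmu _ _ (q - q^-1)^-1 qmu_neq0 qa0 qi0).
Qed.

Definition pairing (v : vec) (g : nat -> seq bool -> K) : K :=
  \sum_(t <- v) t.1 * g t.2.1 t.2.2.

Lemma pairing_linext f v g :
  pairing (linext f v) g = pairing v (fun j u => pairing (f j u) g).
Proof.
elim: v => [|t v IHv]; first by rewrite /pairing /linext /= !big_nil.
rewrite /pairing /linext /= big_cat big_cons big_map -/(linext f v).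
rewrite -/(pairing (linext f v) g) IHv big_distrr /=; congr (_ + _).
by apply: eq_bigr => s _; rewrite mulrA.
Qed.

Lemma eq_pairing v g g' : g =2 g' -> pairing v g = pairing v g'.
Proof. by move=> eq_g; apply: eq_bigr => t _; rewrite eq_g. Qed.

Lemma pairing_scale v c g : pairing v (fun j u => c * g j u) = c * pairing v g.
Proof. by rewrite /pairing big_distrr; apply: eq_bigr => t _; rewrite mulrCA. Qed.

Lemma coef_pairing v i w :
  coef v i w = pairing v (fun j u => if (j, u) == (i, w) then 1 else 0).
Proof.
rewrite /coef /pairing big_mkcond; apply: eq_bigr => -[c [j u]] _.
change ((if (j, u) == (i, w) then c else 0) = c * (if (j, u) == (i, w) then 1 else 0)).
by case: eqP => _; [rewrite mulr1 | rewrite mulr0].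
Qed.

Lemma pairing_basis i w g : pairing (basis i w) g = g i w.
Proof. by rewrite /pairing big_seq1 mul1r. Qed.

Lemma pairing_E_F_basis (k : int) g j u :
  pairing (F_basis k j u) (fun j' u' => pairing (E_basis k j' u') g) =
  qnum 1 (k + 1) * g j u.
Proof.
rewrite /pairing /F_basis /E_basis; case: j => [|j] /=.
  by rewrite !big_cons !big_nil !addr0 expr0z mul1r.
rewrite !big_cons !big_nil /= !addr0 mul1r mulrA -mulrDl.
have -> : j.+1%:Z - k - 1 = j.+1%:Z - (k + 1) by rewrite opprD addrA.
by rewrite qnum_shift.
Qed.

Lemma FchainS n v : Fchain n.+1 v = Fchain n (Fmap n%:Z v).
Proof. by rewrite /Fchain -addn1 iotaD rev_cat. Qed.

Lemma EchainS n v : Echain n.+1 v = Emap n%:Z (Echain n v).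
Proof. by rewrite /Echain -addn1 iotaD foldl_cat. Qed.

Lemma pairing_Echain_Fchain n v g :
  pairing (Echain n (Fchain n v)) g =
  (\prod_(1 <= m < n.+1) qnum 1 m%:Z) * pairing v g.
Proof.
elim: n v g => [|n IHn] v g; first by rewrite big_geq // mul1r.
rewrite EchainS FchainS /Emap pairing_linext IHn /Fmap pairing_linext.
rewrite (eq_pairing _ _ _ (pairing_E_F_basis n%:Z g)) pairing_scale mulrA.
by rewrite [in RHS]big_nat_recr //= intS addrC.
Qed.

Theorem mainTheorem4 (n : nat) : (1 <= n)%N ->
  forall (i i' : nat) (w : seq bool),
    coef (Echain n (Fchain n (basis i [::]))) i' w =
    (if (i', w) == (i, [::]) then \prod_(1 <= m < n.+1) qnum 1 m%:Z else 0).
Proof.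
move=> _ i i' w.
rewrite coef_pairing pairing_Echain_Fchain pairing_basis eq_sym.
by case: eqP => _; [rewrite mulr1 | rewrite mulr0].
Qed.
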